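(* For every topology $\mathcal{T}$ on $[n]$, $$\mathcal{P}_s(\mathcal{T})=\bigsqcup_{f\in\mathcal{L}(\mathcal{T})}\{g\mid g\leq f\}=\bigsqcup_{f\in\mathcal{L}(\mathcal{T})}\mathcal{P}_s(\mathcal{T}_f),$$ the unions being disjoint.
   Context: $[n]=\{1,\ldots,n\}$. For a topology $\mathcal{T}$ on $[n]$: $i\leq_{\mathcal{T}}j$ iff every open set containing $i$ contains $j$; $i\sim_{\mathcal{T}}j$ iff $i\leq_{\mathcal{T}}j$ and $j\leq_{\mathcal{T}}i$; $i<_{\mathcal{T}}j$ iff $i\leq_{\mathcal{T}}j$ and not $j\leq_{\mathcal{T}}i$. A packed word of length $n$ is a word $f=f(1)\ldots f(n)$ of positive integers with $\{f(1),\ldots,f(n)\}=\{1,\ldots,\max f\}$. A (strict) T-partition of $\mathcal{T}$ is a packed word $g$ of length $n$ such that: $i\leq_{\mathcal{T}}j\Rightarrow g(i)\leq g(j)$; $i<_{\mathcal{T}}j$ and $i>j\Rightarrow g(i)<g(j)$; if $i<j<k$, $i\sim_{\mathcal{T}}k$ and $g(i)=g(j)=g(k)$ then $i\sim_{\mathcal{T}}j$ and $j\sim_{\mathcal{T}}k$; $\mathcal{P}_s(\mathcal{T})$ is their set. A linear extension of $\mathcal{T}$ is a packed word $f$ of length $n$ with $f(i)=f(j)\Leftrightarrow i\sim_{\mathcal{T}}j$ and $i<_{\mathcal{T}}j\Rightarrow f(i)<f(j)$; $\mathcal{L}(\mathcal{T})$ is their set. For packed words $f,g$ of length $n$, $g\leq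 f$ means: for all $i,j$, $f(i)\leq f(j)\Rightarrow g(i)\leq g(j)$; $f(i)>f(j)$ and $i<j\Rightarrow g(i)>g(j)$; $f(i)=f(j)\Rightarrow g(i)=g(j)$ (the $g$ in the middle union range over packed words of length $n$). For a packed word $f$, $\mathcal{T}_f$ is the topology on $[n]$ with preorder $i\leq j$ iff $f(i)\leq f(j)$. *)

From mathcomp Require Import all_boot.
Set Implicit Arguments. Unset Strict Implicit. Unset Printing Implicit Defensive.

(* Points of [n] are represented by 'I_n (i.e. {0,...,n-1}, shifted by one;
   the order on indices is the usual order of nat, so the shift is harmless). *)

Definition is_topology (n : nat) (T : {set {set 'I_n}}) : Prop :=
  [/\ set0 \in T, setT \in T,
      (forall U V, U \in T -> V \in T -> U :|: V \in T) &
      (forall U V, U \in T -> V \in T -> U :&: V \in T)].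

Definition leT (n : nat) (T : {set {set 'I_n}}) (i j : 'I_n) : Prop :=
  forall U, U \in T -> i \in U -> j \in U.
Definition simT (n : nat) (T : {set {set 'I_n}}) (i j : 'I_n) : Prop :=
  leT T i j /\ leT T j i.
Definition ltT (n : nat) (T : {set {set 'I_n}}) (i j : 'I_n) : Prop :=
  leT T i j /\ ~ leT T j i.

Definition word n := {ffun 'I_n -> nat}.

Definition packed (n : nat) (f : word n) : Prop :=
  (forall i, 0 < f i) /\
  (forall k, 0 < k -> k <= \max_(i < n) f i -> exists i, f i = k).

Definition Ps (n : nat) (T : {set {set 'I_n}}) (g : word n) : Prop :=
  [/\ packed g,
      (forall i j, leT T i j -> g i <= g j),
      (forall i j : 'I_n, ltT T i j -> j < i -> g i < g j) &
      (forall i j k : 'I_n, i < j -> j < k -> simT T i k ->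
          g i = g j -> g j = g k -> simT T i j /\ simT T j k)].

Definition Lext (n : nat) (T : {set {set 'I_n}}) (f : word n) : Prop :=
  [/\ packed f,
      (forall i j, f i = f j <-> simT T i j) &
      (forall i j, ltT T i j -> f i < f j)].

Definition word_le (n : nat) (g f : word n) : Prop :=
  forall i j : 'I_n,
    [/\ (f i <= f j -> g i <= g j),
        (f j < f i -> i < j -> g j < g i) &
        (f i = f j -> g i = g j)].

(* T_f : the topology whose open sets are the up-sets of the preorder
   i <= j iff f i <= f j; its specialization preorder is exactly that. *)
Definition topology_of_word (n : nat) (f : word n) : {set {set 'I_n}} :=
  [set U : {set 'I_n} | [forall i, forall j, (i \in U) && (f i <= f j) ==> (j \in U)]].

From mathcomp Require Import all_boot zify.
Set Implicit Arguments. Unset Strict Implicit. Unset Printing Implicit Defensive.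

(* A strict T-partition g lies below exactly one linear extension of T: the
   one ranking i before j when g i < g j, or when g i = g j, i and j are not
   T-equivalent and the least element of the class of i precedes that of j.
   Conversely every packed g below a linear extension f of T is a strict
   T-partition, and its order is recovered from g and T alone, which gives
   disjointness.  The words below f are exactly the strict T_f-partitions,
   since the specialization preorder of T_f is the order of the values of f.
   Only the specialization preorder of T enters. *)

Lemma lex_ltE (a b a' b' d : nat) : b < d -> b' < d ->
  (a * d + b < a' * d + b') = (a < a') || (a == a') && (b < b').
Proof.
move=> bd b'd; case: (ltngtP a a') => [lt|gt|->] /=.
- have : a * d + d <= a' * d by rewrite -mulSnr leq_mul2r lt orbT.
  lia.
- have : a' * d + d <= a * d by rewrite -mulSnr leq_mul2r gt orbT.
  lia.
- by rewrite ltn_add2l.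
Qed.

Lemma lex_eqE (a b a' b' d : nat) : b < d -> b' < d ->
  (a * d + b == a' * d + b') = (a == a') && (b == b').
Proof.
move=> bd b'd; case: (ltngtP a a') => [lt|gt|->]; last by rewrite eqn_add2l.
- by apply/negbTE; rewrite neq_ltn lex_ltE ?lt.
- by apply/negbTE; rewrite neq_ltn (lex_ltE a') ?gt ?orbT.
Qed.

Section PackedWords.
Variable n : nat.
Implicit Types (f : word n) (i j : 'I_n).

Lemma packed_of_pred_closed f : (forall i, 0 < f i) ->
  (forall i, 1 < f i -> exists j, f j = (f i).-1) -> packed f.
Proof.
move=> f_gt0 f_pred; split=> // k k_gt0 k_le_max.
have [i k_le_fi] : exists i, k <= f i.
  apply/existsP; apply: contraLR k_le_max => /existsPn none.
  suff : \max_(i < n) f i <= k.-1 by lia.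
  by apply/bigmax_leqP => i _; have := none i; lia.
elim: (f i - k) {-2}i (erefl (f i - k)) k_le_fi => [|d IH] {}i fik k_le_fi.
  by exists i; lia.
have [|j fj] := f_pred i; first by lia.
by apply: (IH j); lia.
Qed.

Lemma packed_le_of_ltn_homo f f' : packed f -> packed f' ->
  (forall i j, f i < f j -> f' i < f' j) -> forall i, f i <= f' i.
Proof.
move=> [f_gt0 f_onto] [f'_gt0 _] homo.
suff le_at k i : f i = k -> k <= f' i by move=> i; exact: le_at.
elim: k i => [//|k IH] i fi; case: (posnP k) => [->|k_gt0]; first exact: f'_gt0.
have [|j fj] := f_onto k k_gt0; first by apply: leq_trans (leq_bigmax i); rewrite fi.
have := homo j i; rewrite fj fi ltnSn => /(_ isT).
by have := IH j fj; lia.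
Qed.

Lemma packed_eq_of_ltnE f f' : packed f -> packed f' ->
  (forall i j, (f i < f j) = (f' i < f' j)) -> f = f'.
Proof.
move=> fp f'p ltE; apply/ffunP => i; apply/eqP; rewrite eqn_leq.
by rewrite !packed_le_of_ltn_homo // => j k; rewrite ltE.
Qed.

End PackedWords.

Section Pack.
Variables (n : nat) (h : 'I_n -> nat).
Implicit Types i j : 'I_n.

Let bound := (\max_(i < n) h i).+1.

Let h_lt_bound i : h i < bound.
Proof. by rewrite ltnS leq_bigmax. Qed.

Let vals_below i : {set 'I_bound} :=
  [set v : 'I_bound | (v <= h i) && [exists j, h j == v]].

(* [pack h i] is the rank of [h i] among the values of [h]. *)
Definition pack : word n := [ffun i => #|vals_below i|].

Let hval i : 'I_bound := Ordinal (h_lt_bound i).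

Let hval_below i : hval i \in vals_below i.
Proof. by rewrite inE /= leqnn; apply/existsP; exists i. Qed.

Let vals_below_sub i j : h i <= h j -> vals_below i \subset vals_below j.
Proof.
move=> hij; apply/subsetP => v; rewrite !inE => /andP[vi ->].
by rewrite (leq_trans vi hij).
Qed.

Lemma pack_ltE i j : (pack i < pack j) = (h i < h j).
Proof.
apply/idP/idP => [|hij]; last first.
  rewrite !ffunE; apply/proper_card/properP; split.
    exact/vals_below_sub/ltnW.
  by exists (hval j); rewrite ?hval_below // inE /= leqNgt hij.
apply: contraLR; rewrite -!leqNgt => hji.
by rewrite !ffunE subset_leq_card // vals_below_sub.
Qed.

Lemma pack_eqE i j : (pack i == pack j) = (h i == h j).
Proof. by rewrite !eqn_leq !(leqNgt (pack _)) !pack_ltE -!leqNgt. Qed.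

Lemma pack_packed : packed pack.
Proof.
apply: packed_of_pred_closed => i; rewrite ffunE.
  by apply/card_gt0P; exists (hval i).
rewrite (cardsD1 (hval i)) hval_below add1n ltnS => /card_gt0P[v].
rewrite !inE => /andP[v_ne /andP[v_le /existsP[j0 /eqP hj0]]].
have hj0_lt : h j0 < h i.
  rewrite ltn_neqAle hj0 v_le andbT.
  by apply: contra v_ne => /eqP hv; apply/eqP/val_inj.
case: (@arg_maxnP _ j0 (fun j => h j < h i) h hj0_lt) => j hj_lt hj_max.
exists j; rewrite ffunE /=.
apply: eq_card => w; rewrite !inE.
case: (boolP [exists k, h k == w]) => [/existsP[k /eqP hk]|_]; last by rewrite !andbF.
rewrite !andbT -(inj_eq val_inj) /= -hk.
apply/idP/idP => [hk_le|/andP[hk_ne hk_le]].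
  by have hk_lt := leq_ltn_trans hk_le hj_lt; rewrite neq_ltn hk_lt (ltnW hk_lt).
by apply: hj_max; rewrite ltn_neqAle hk_ne.
Qed.

End Pack.

Section Specialization.
Variables (n : nat) (T : {set {set 'I_n}}).
Implicit Types (f g : word n) (i j k : 'I_n).

Definition leTb i j := [forall U, (U \in T) ==> (i \in U) ==> (j \in U)].

Lemma leTP i j : reflect (leT T i j) (leTb i j).
Proof.
apply: (iffP forallP) => [le U UT iU|le U].
  by have := le U; rewrite UT iU.
by apply/implyP => UT; apply/implyP; exact: le.
Qed.

Lemma leT_trans i j k : leT T i j -> leT T j k -> leT T i k.
Proof. by move=> ij jk U UT iU; exact: jk UT (ij U UT iU). Qed.

Definition simTb i j := leTb i j && leTb j i.

Lemma simTP i j : reflect (simT T i j) (simTb i j).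
Proof. by apply: (iffP andP) => -[ij ji]; split; apply/leTP. Qed.

Lemma simTb_refl i : simTb i i.
Proof. by apply/simTP; split. Qed.

Lemma simTb_sym i j : simTb i j = simTb j i.
Proof. exact: andbC. Qed.

Lemma simTb_trans i j k : simTb i j -> simTb j k -> simTb i k.
Proof.
move=> /simTP[ij ji] /simTP[jk kj]; apply/simTP.
by split; [apply: leT_trans ij jk | apply: leT_trans kj ji].
Qed.

Lemma Lext_homo f i j : Lext T f -> leT T i j -> f i <= f j.
Proof.
case=> _ f_sim f_lt ij; case: (leTP j i) => [ji|nji].
  by rewrite (proj2 (f_sim i j)).
exact/ltnW/f_lt.
Qed.

Lemma Ps_of_word_le f g : Lext T f -> packed g -> word_le g f -> Ps T g.
Proof.
move=> Lf gp gf; have [_ f_sim f_lt] := Lf; split=> //.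
- by move=> i j /(Lext_homo Lf); case: (gf i j).
- by move=> i j /f_lt fij ji; case: (gf j i) => _ /(_ fij ji).
- move=> i j k ij jk /f_sim fik gij gjk.
  have fij : f i = f j.
    case: (ltngtP (f i) (f j)) => [lt|gt|//].
    + by case: (gf j k) => _ /(_ _ jk); rewrite -fik => /(_ lt); lia.
    + by case: (gf i j) => _ /(_ gt ij); lia.
  by split; apply/f_sim; lia.
Qed.

Lemma Lext_word_le_ltnE f g : Lext T f -> word_le g f -> forall i j,
  (f i < f j) = (g i < g j) || [&& g i == g j, ~~ simTb i j & i < j].
Proof.
case=> _ f_sim _ gf i j; case: (ltngtP (g i) (g j)) => [lt|gt|geq] /=.
- by apply: contraTT lt; rewrite -!leqNgt; case: (gf j i) => + _ _; apply.
- by apply: contraTF gt => /ltnW; case: (gf i j) => + _ _ => /[apply]; lia.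
- case: (ltngtP (f i) (f j)) => [lt|gt|feq].
  + case: (boolP (simTb i j)) => [/simTP/f_sim|_]; first by lia.
    case: (ltngtP i j) => [//|ji|/val_inj ij]; last by rewrite ij ltnn in lt.
    by case: (gf j i) => _ /(_ lt ji); lia.
  + case: (ltngtP i j) => [ij|_|_]; rewrite ?andbF //.
    by case: (gf i j) => _ /(_ gt ij); lia.
  + by rewrite (introT (simTP _ _) (proj1 (f_sim i j) feq)).
Qed.

Lemma word_le_Lext_unique f f' g : Lext T f -> Lext T f' ->
  word_le g f -> word_le g f' -> f = f'.
Proof.
move=> Lf Lf' gf gf'; have [fp _ _] := Lf; have [f'p _ _] := Lf'.
apply: packed_eq_of_ltnE => // i j.
by rewrite (Lext_word_le_ltnE Lf gf) (Lext_word_le_ltnE Lf' gf').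
Qed.

Section LinearExtensionOfPartition.
Variable g : word n.
Hypothesis Pg : Ps T g.

Lemma Ps_sim i j : simTb i j -> g i = g j.
Proof.
have [_ g_homo _ _] := Pg; move=> /simTP[ij ji].
by apply/eqP; rewrite eqn_leq !g_homo.
Qed.

Definition class_min i : 'I_n := [arg min_(k < i | simTb i k) val k].

Lemma class_minP i :
  simTb i (class_min i) /\ forall k, simTb i k -> class_min i <= k.
Proof. by rewrite /class_min; case: arg_minnP => [|k]; [exact: simTb_refl|]. Qed.

Lemma class_min_eqE i j : (class_min i == class_min j) = simTb i j.
Proof.
have [mi mi_min] := class_minP i; have [mj mj_min] := class_minP j.
apply/eqP/idP => [mij|ij].
  by apply: simTb_trans mi _; rewrite mij simTb_sym.
apply/val_inj/eqP; rewrite eqn_leq mi_min ?mj_min //.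
  by apply: simTb_trans mi; rewrite simTb_sym.
exact: simTb_trans ij mj.
Qed.

(* Lexicographic rank of (g i, class_min i); the second entry is below n. *)
Let key i := g i * n + class_min i.

Let key_ltE i j :
  (key i < key j) = (g i < g j) || (g i == g j) && (class_min i < class_min j).
Proof. exact: lex_ltE. Qed.

Let key_eqE i j : (key i == key j) = simTb i j.
Proof.
rewrite /key lex_eqE // (inj_eq val_inj) class_min_eqE.
by case: (boolP (simTb i j)) => [/Ps_sim ->|]; rewrite ?eqxx ?andbF.
Qed.

Definition Ps_linext : word n := pack key.

Lemma Lext_Ps_linext : Lext T Ps_linext.
Proof.
split; first exact: pack_packed.
  move=> i j; split => [/eqP|/simTP sij].
    by rewrite pack_eqE key_eqE => /simTP.
  by apply/eqP; rewrite pack_eqE key_eqE.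
move=> i j [ij nji]; rewrite /Ps_linext pack_ltE key_ltE.
have [_ g_homo g_strict _] := Pg.
case: (ltngtP (g i) (g j)) => [//|gt|geq] /=; first by have := g_homo _ _ ij; lia.
have [mi _] := class_minP i; have [mj _] := class_minP j.
have /simTP[_ mii] := mi; have /simTP[jmj _] := mj.
have m_ne : class_min i != class_min j.
  by rewrite class_min_eqE; apply: contra_notN nji => /simTP[].
have m_lt : ltT T (class_min i) (class_min j).
  split; first by apply: leT_trans mii (leT_trans ij jmj).
  by move=> mji; apply: nji; apply: leT_trans jmj (leT_trans mji mii).
rewrite ltn_neqAle (inj_eq val_inj) m_ne leqNgt /=.
apply/negP => /(g_strict _ _ m_lt).
by rewrite -(Ps_sim mi) -(Ps_sim mj) geq ltnn.
Qed.

Lemma word_le_Ps_linext : word_le g Ps_linext.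
Proof.
move=> i j; rewrite /Ps_linext !pack_ltE; split.
- by rewrite leqNgt pack_ltE key_ltE negb_or => /andP[+ _]; rewrite -leqNgt.
- rewrite key_ltE => /orP[//|/andP[/eqP gji mji]] ij; exfalso.
  have [mi mi_min] := class_minP i; have [mj _] := class_minP j.
  have [_ _ _ g_same] := Pg.
  have mj_i : class_min j < i by have := mi_min i (simTb_refl i); lia.
  have mj_sim_j : simT T (class_min j) j by apply/simTP; rewrite simTb_sym.
  have g_mj : g (class_min j) = g i by rewrite -(Ps_sim mj).
  have [/simTP mj_sim_i _] := g_same _ _ _ mj_i ij mj_sim_j g_mj (esym gji).
  have := mi_min (class_min j); rewrite simTb_sym mj_sim_i => /(_ isT).
  lia.
- by move/eqP; rewrite pack_eqE key_eqE => /Ps_sim.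
Qed.

End LinearExtensionOfPartition.
End Specialization.

Section WordTopology.
Variable n : nat.
Implicit Types (f g : word n) (i j : 'I_n).

Lemma leT_topology_of_word f i j : leT (topology_of_word f) i j <-> f i <= f j.
Proof.
split=> [le_ij|fij U].
  have := le_ij [set k | f i <= f k]; rewrite !inE leqnn; apply=> //.
  apply/forallP => a; apply/forallP => b; apply/implyP => /andP[].
  by rewrite !inE; exact: leq_trans.
by rewrite inE => /forallP U_up iU; have /forallP/(_ j) := U_up i; rewrite iU fij.
Qed.

Lemma Lext_topology_of_word f : packed f -> Lext (topology_of_word f) f.
Proof.
move=> fp; split=> // i j.
  split=> [fij|[/leT_topology_of_word ij /leT_topology_of_word ji]].
    by split; apply/leT_topology_of_word; rewrite fij.
  by apply/eqP; rewrite eqn_leq ij ji.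
by case=> _ nji; rewrite ltnNge; apply/negP => /leT_topology_of_word.
Qed.

Lemma Ps_topology_of_wordE f g : packed f ->
  Ps (topology_of_word f) g <-> packed g /\ word_le g f.
Proof.
move=> fp; split=> [Pg|[gp gf]]; last first.
  exact: Ps_of_word_le (Lext_topology_of_word fp) gp gf.
have [gp g_homo g_strict _] := Pg; split=> // i j; split.
- by move/leT_topology_of_word/g_homo.
- move=> fji ij; apply: g_strict ij; split; first by apply/leT_topology_of_word; lia.
  by move/leT_topology_of_word; lia.
- move=> fij; apply/eqP; rewrite eqn_leq !g_homo //; apply/leT_topology_of_word; lia.
Qed.

End WordTopology.

Theorem corollary20 (n : nat) (T : {set {set 'I_n}}) (hT : is_topology T) :
  (* P_s(T) = U_{f in L(T)} {g | g <= f} *)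
  (forall g : word n,
      Ps T g <-> exists2 f, Lext T f & packed g /\ word_le g f) /\
  (* U_{f in L(T)} {g | g <= f} = U_{f in L(T)} P_s(T_f) *)
  (forall g : word n,
      (exists2 f, Lext T f & packed g /\ word_le g f) <->
      (exists2 f, Lext T f & Ps (topology_of_word f) g)) /\
  (* the first union is disjoint *)
  (forall (f f' g : word n), Lext T f -> Lext T f' ->
      packed g -> word_le g f -> word_le g f' -> f = f') /\
  (* the second union is disjoint *)
  (forall (f f' g : word n), Lext T f -> Lext T f' ->
      Ps (topology_of_word f) g -> Ps (topology_of_word f') g -> f = f').
Proof.
split; [|split; [|split]].
- move=> g; split=> [Pg|[f Lf [gp gf]]]; last exact: Ps_of_word_le Lf gp gf.
  exists (Ps_linext T g); first exact: Lext_Ps_linext.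
  by split; [case: Pg | exact: word_le_Ps_linext].
- move=> g; split=> -[f Lf gf]; exists f => //; have [fp _ _] := Lf.
  + exact/Ps_topology_of_wordE.
  + exact/(Ps_topology_of_wordE _ fp).
- by move=> f f' g Lf Lf' _ gf gf'; exact: word_le_Lext_unique Lf Lf' gf gf'.
- move=> f f' g Lf Lf'; have [fp _ _] := Lf; have [f'p _ _] := Lf'.
  rewrite !Ps_topology_of_wordE // => -[_ gf] [_ gf'].
  exact: word_le_Lext_unique Lf Lf' gf gf'.
Qed.
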